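(* Let $\mathfrak D$ be an admissible domain with cover $\tilde{\mathfrak D}$, $T>0$, and let $\bm\varphi\in C^1([0,T];C^1(\mathbf{Cl}\tilde{\mathfrak D};\mathbb R^3))\cap C([0,T];C^2(\mathbf{Cl}\tilde{\mathfrak D};\mathbb R^3))$ satisfy $\bm\varphi(0,\bar{\bm x})=\bar{\bm x}$ for all $\bar{\bm x}\in\tilde{\mathfrak D}$. Let $\mathfrak O,\mathfrak O_0,\mathfrak O_1$ be connected open subsets of $\mathbb R^3$ with $\mathfrak B_0\subset\mathfrak O_0\Subset\mathfrak O\Subset\mathfrak O_1\Subset\tilde{\mathfrak D}$ and $\mathfrak O_1$ convex. Then for a sufficiently small $T_1\in\,]0,T[$ there is a mapping $\bm\psi(t,\cdot):\mathfrak O\to\mathfrak O_1$, $t\in[0,T_1]$, such that $\bm x=\bm\varphi(t,\bm\psi(t,\bm x))$ for all $(t,\bm x)\in[0,T_1]\times\mathfrak O$, and moreover $\mathfrak O_0\subset\bm\psi(t,\mathfrak O)$ for all $t\in[0,T_1]$.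
   Context: $\mathfrak B_0=\{\bm x\in\mathbb R^3:\|\bm x\|\le R_0\}$ with $R_0>0$. An admissible domain is an open connected $\mathfrak D\subset\mathbb R^3$ such that $\tilde{\mathfrak D}=\mathfrak D\cup\mathfrak B_0$ (its cover) is open and connected, $\mathfrak D=\tilde{\mathfrak D}\setminus\mathfrak B_0$, and $\partial\mathfrak D$ is smooth. $A\Subset B$ means $\mathbf{Cl}A$ is a compact subset of $B$. *)

From HB Require Import structures.
From mathcomp Require Import all_boot all_order all_algebra.
From mathcomp Require Import all_classical all_reals all_analysis.
Set Implicit Arguments. Unset Strict Implicit. Unset Printing Implicit Defensive.
Import Order.TTheory GRing.Theory Num.Theory.
Import numFieldNormedType.Exports.
Local Open Scope classical_set_scope.
Local Open Scope ring_scope.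

Section Defs.
Variable R : realType.
Local Notation V := 'rV[R]_3.

(* Euclidean norm on R^3 (the library norm on 'rV is the max norm). *)
Definition enorm (x : V) : R := Num.sqrt (\sum_(i < 3) x 0 i ^+ 2).

Definition Bzero (R0 : R) : set V := [set x | enorm x <= R0].

Definition evec (i : 'I_3) : V := delta_mx 0 i.

Fixpoint dit {W : normedModType R} (s : seq 'I_3) (f : V -> W) : V -> W :=
  match s with
  | [::] => f
  | i :: s' => fun x => derive (dit s' f) x (evec i)
  end.

Definition smooth_on (U : set V) (g : V -> R) : Prop :=
  forall s : seq 'I_3,
    (forall i x, U x -> derivable (dit s g) x (evec i)) /\
    {in U, continuous (dit s g)}.

Definition bdry (A : set V) : set V := closure A `\` interior A.

Definition smooth_boundary (A : set V) : Prop :=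
  forall p, bdry A p ->
    exists U : set V, exists g : V -> R,
      [/\ open U, U p, smooth_on U g,
          (forall x, U x -> exists i, dit [:: i] g x != 0) &
          (A `&` U = [set x | U x /\ g x < 0])].

Definition admissible (R0 : R) (D : set V) : Prop :=
  [/\ open D /\ connected D,
      open (D `|` Bzero R0), connected (D `|` Bzero R0),
      D = (D `|` Bzero R0) `\` Bzero R0 & smooth_boundary D].

Definition dcover (R0 : R) (D : set V) : set V := D `|` Bzero R0.

Definition compact_in (A B : set V) : Prop :=
  compact (closure A) /\ closure A `<=` B.

(* g (defined on the open set O) belongs to the closure space:
   it extends to a bounded continuous function on closure O. *)
Definition ext_bcont {W : normedModType R} (O : set V) (g : V -> W) : Prop :=
  exists G : V -> W,
    [/\ {within closure O, continuous G},
        (forall x, O x -> G x = g x) &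
        exists M : R, forall x, closure O x -> `|G x| <= M].

(* f in C^k(Cl O): all partial derivatives of order <= k exist in O and
   extend to bounded continuous functions on Cl O. *)
Definition Ck_cl (k : nat) (O : set V) (f : V -> V) : Prop :=
  forall s : seq 'I_3, (size s <= k)%N ->
    ext_bcont O (dit s f) /\
    ((size s < k)%N -> forall i x, O x -> derivable (dit s f) x (evec i)).

(* t |-> f t is continuous [0,T] -> C^k(Cl O) (C^k norm = sup-norms of
   derivatives of order <= k). *)
Definition cont_Ck (k : nat) (T : R) (O : set V) (f : R -> V -> V) : Prop :=
  (forall t, 0 <= t <= T -> Ck_cl k O (f t)) /\
  forall t0, 0 <= t0 <= T -> forall eps : R, 0 < eps ->
    exists2 delta : R, 0 < delta &
      forall t, 0 <= t <= T -> `|t - t0| < delta ->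
        forall s : seq 'I_3, (size s <= k)%N ->
          forall x, O x -> `|dit s (f t) x - dit s (f t0) x| <= eps.

(* t |-> f t is in C^1([0,T]; C^k(Cl O)): differentiable (one-sided at the
   endpoints) in the C^k norm with a derivative in C([0,T]; C^k(Cl O)). *)
Definition C1_Ck (k : nat) (T : R) (O : set V) (f : R -> V -> V) : Prop :=
  cont_Ck k T O f /\
  exists df : R -> V -> V,
    cont_Ck k T O df /\
    forall t0, 0 <= t0 <= T -> forall eps : R, 0 < eps ->
      exists2 delta : R, 0 < delta &
        forall t, 0 <= t <= T -> 0 < `|t - t0| < delta ->
          forall s : seq 'I_3, (size s <= k)%N ->
            forall x, O x ->
              `|(t - t0)^-1 *: (dit s (f t) x - dit s (f t0) x)
                 - dit s (df t0) x| <= eps.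

End Defs.

From HB Require Import structures.
From mathcomp Require Import all_boot all_order all_algebra.
From mathcomp Require Import all_classical all_reals all_analysis.
From mathcomp.algebra_tactics Require Import ring lra.
Import Order.TTheory GRing.Theory Num.Theory.
Import numFieldNormedType.Exports.
Local Open Scope classical_set_scope.
Local Open Scope ring_scope.

(* For small t, phi t is C^1-close to the identity on the cover:
   |phi t y - y| <= eps and |d_i phi t y - e_i| <= eps.  Integrating the
   partial derivatives along axis-parallel paths shows that phi t - id is
   (3 eps)-Lipschitz on every closed ball (of the max norm) inside the cover.
   So for x in O the map y |-> x - (phi t y - y) is a contraction of the
   closed ball of radius eps around x, a ball contained in O1, and its fixed
   point psi t x solves phi t (psi t x) = x.  The same bound makes phi t
   injective on that ball; as phi t moves a point z of O0 by at most eps,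
   x = phi t z lies in O and psi t x = z. *)

Section lipschitz_perturbation.
Context {R : realType} {V : completeNormedModType R}.
Implicit Types (f : V -> V) (A : set V) (x : V) (q r : R).

Lemma lipschitz_perturbation_inj f A q : q < 1 -> q.-lipschitz_A (f - id) ->
  {in A &, injective f}.
Proof.
move=> q1 lip y y' /[!inE] Ay Ay' fyy'.
have : `|y - y'| <= q * `|y - y'|.
  have := lip (y', y) (conj Ay' Ay); rewrite /= !fctE fyy' (distrC y').
  by rewrite opprB [f y' - y' + _]addrC addrA subrK.
by move=> le; apply/subr0_eq/normr0_eq0; have := normr_ge0 (y - y'); nra.
Qed.

Lemma lipschitz_perturbation_solve f x r q : 0 < r -> 0 <= q < 1 ->
  q.-lipschitz_(closed_ball x r) (f - id) ->
  (forall y, closed_ball x r y -> `|f y - y| <= r) ->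
  exists2 y, closed_ball x r y & f y = x.
Proof.
move=> r0 /andP[q0 q1] lip fr.
pose F y := x - (f y - y).
have FB : {homo F : y / closed_ball x r y >-> closed_ball x r y}.
  by move=> y By; rewrite closed_ballE // /closed_ball_ /= /F subKr; exact: fr.
have : is_contraction (mkfun_fun FB).
  exists (NngNum q0); split => // -[y y'] By /=.
  by rewrite /F opprB addrC addrA subrK distrC; exact: (lip (y, y') By).
move=> /banach_fixed_point[]; first exact: closed_ball_closed.
  by exists x; exact: closed_ballxx.
move=> y By /= yF; exists y => //.
by apply: (addIr (- y)); rewrite {3}yF /F subKr.
Qed.

End lipschitz_perturbation.

Lemma compact_ball_subset_open {R : realType} {W : normedModType R}
    {K U : set W} :
  compact K -> open U -> K `<=` U ->
  exists2 r : R, 0 < r & forall x, K x -> ball x r `<=` U.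
Proof.
move=> /compact_near_coveringP cK oU KU.
have : \forall r \near 0^'+, K `<=` [set x | ball x r `<=` U].
  apply: cK => x Kx.
  have /nbhs_ballP[e e0 eU] : nbhs x U.
    by apply: open_nbhs_nbhs; split => //; exact: KU.
  have e20 : 0 < e / 2 by rewrite divr_gt0.
  near=> x' r; apply: subset_trans eU => y; rewrite -!ball_normE /ball_ /= => x'y.
  have xx' : `|x - x'| < e / 2.
    by near: x'; apply/nbhs_ballP; exists (e / 2) => // z; rewrite -ball_normE.
  have re : r < e / 2 by near: r; exact: nbhs_right_lt.
  rewrite -(subrK x' x) -addrA (splitr e); apply: le_lt_trans (ler_normD _ _) _.
  by rewrite ltrD // (lt_trans x'y).
move=> /(filterI (nbhs_right_gt 0))/filter_ex[r [r0 rK]].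
by exists r => // x /rK.
Unshelve. all: by end_near.
Qed.

Section matrix_entries.
Context {R : realDomainType} {m n : nat}.
Implicit Types (x : 'M[R]_(m, n)).

Lemma mx_norm_entry x i j : `|x i j| <= `|x|.
Proof.
by rewrite [leRHS]/Num.norm /= mx_normrE; apply/bigmax_geP; right; exists (i, j).
Qed.

Lemma mx_norm_le_entries x c : 0 <= c -> (forall i j, `|x i j| <= c) -> `|x| <= c.
Proof.
move=> c0 xc; rewrite [leLHS]/Num.norm /= mx_normrE.
by apply/bigmax_leP; split => // -[i j] _; exact: xc.
Qed.

End matrix_entries.

Section mean_value_inequality.
Context {R : realType} {n : nat}.
Local Notation V := 'rV[R]_n.
Implicit Types (f h : V -> V) (c p e y : V).

Lemma is_derive_line_entry h p e s k : derivable h (s *: e + p) e ->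
  is_derive s 1 (fun t => h (t *: e + p) 0 k) ('D_e h (s *: e + p) 0 k).
Proof.
move=> dh; set u := fun t => h (t *: e + p) 0 k.
have quotE : (fun t : R => t^-1 *: ((u \o shift s) (t *: 1) - u s)) =
    (fun M : V => M 0 k) \o
    (fun t : R => t^-1 *: ((h \o shift (s *: e + p)) (t *: e) - h (s *: e + p))).
  by apply/funext => t; rewrite /u /= !mxE [t *: 1]mulr1 scalerDl addrA.
have cvg_quot : (fun t : R => t^-1 *: ((u \o shift s) (t *: 1) - u s)) @ 0^' -->
    'D_e h (s *: e + p) 0 k.
  by rewrite quotE; apply: cvg_comp; [exact: dh|exact: coord_continuous].
by apply: DeriveDef; [exact: cvgP cvg_quot|exact: cvg_lim cvg_quot].
Qed.

Lemma mean_value_ineq_line f p e a b eps : a <= b ->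
  (forall s, a <= s <= b ->
     derivable f (s *: e + p) e /\ `|'D_e f (s *: e + p) - e| <= eps) ->
  `|(f (b *: e + p) - (b *: e + p)) - (f (a *: e + p) - (a *: e + p))|
    <= eps * (b - a).
Proof.
move=> ab df.
have eps0 : 0 <= eps.
  by have := df a; rewrite lexx ab => /(_ isT)[_]; exact: le_trans.
apply: mx_norm_le_entries => [|i k]; first by rewrite mulr_ge0 ?subr_ge0.
set u := fun t => f (t *: e + p) 0 k.
rewrite [X in `|X|](_ : _ = u b - u a - e 0 k * (b - a)); last first.
  by rewrite (ord1 i) /u !mxE; ring.
have du s : s \in `[a, b] -> is_derive s 1 u ('D_e f (s *: e + p) 0 k).
  by rewrite in_itv => /df[dfs _]; exact: is_derive_line_entry.
have cu : {within `[a, b], continuous u}.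
  by apply: derivable_within_continuous => s /du[].
have [c] := MVT_segment ab (fun s s_ab => du s (subset_itv_oo_cc s_ab)) cu.
rewrite in_itv /= => cab ->.
rewrite -mulrBl normrM [`|b - a|]ger0_norm ?subr_ge0 //.
rewrite ler_wpM2r ?subr_ge0 //; have [_] := df c cab; apply: le_trans.
by have := mx_norm_entry ('D_e f (c *: e + p) - e) 0 k; rewrite !mxE.
Qed.

Lemma mean_value_ineq_line0 f p e d eps :
  (forall s, (0 <= s <= d) || (d <= s <= 0) ->
     derivable f (s *: e + p) e /\ `|'D_e f (s *: e + p) - e| <= eps) ->
  `|(f (d *: e + p) - (d *: e + p)) - (f p - p)| <= eps * `|d|.
Proof.
move=> df; have [d0|d0] := leP 0 d.
  have := mean_value_ineq_line f p e 0 d eps d0.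
  rewrite scale0r add0r subr0 ger0_norm //.
  by apply=> s sd; apply: df; rewrite sd.
have := mean_value_ineq_line f p e d 0 eps (ltW d0).
rewrite scale0r add0r sub0r ltr0_norm // distrC.
by apply=> s sd; apply: df; rewrite sd orbT.
Qed.

Definition coord_path (y y' : V) (m : nat) : V :=
  \row_j (if (j < m)%N then y' 0 j else y 0 j).

Lemma coord_path0 y y' : coord_path y y' 0 = y.
Proof. by apply/rowP => j; rewrite mxE. Qed.

Lemma coord_path_full y y' : coord_path y y' n = y'.
Proof. by apply/rowP => j; rewrite mxE ltn_ord. Qed.

Lemma coord_path_lineE y y' (m j : 'I_n) s :
  (s *: delta_mx 0 m + coord_path y y' m) 0 j =
  if (j < m)%N then y' 0 j else if j == m then y 0 j + s else y 0 j.
Proof.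
rewrite !mxE eqxx /= eq_sym; case: (eqVneq j m) => [->|_].
  by rewrite ltnn mulr1 addrC.
by rewrite mulr0 add0r.
Qed.

Lemma coord_pathS y y' (m : 'I_n) :
  (y' 0 m - y 0 m) *: delta_mx 0 m + coord_path y y' m = coord_path y y' m.+1.
Proof.
apply/rowP => j; rewrite coord_path_lineE [RHS]mxE.
rewrite [(j < m.+1)%N]ltnS [(j <= m)%N]leq_eqVlt.
case: (eqVneq j m) => [->|jm] /=; first by rewrite ltnn eqxx addrC subrK.
by move: jm; rewrite -val_eqE => /negbTE ->.
Qed.

Lemma coord_path_line_ball c r y y' (m : 'I_n) s : 0 < r ->
  closed_ball c r y -> closed_ball c r y' ->
  (0 <= s <= y' 0 m - y 0 m) || (y' 0 m - y 0 m <= s <= 0) ->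
  closed_ball c r (s *: delta_mx 0 m + coord_path y y' m).
Proof.
move=> r0; rewrite !closed_ballE // /closed_ball_ /= => cy cy' sm.
apply: mx_norm_le_entries => [|i j]; first exact: ltW.
have := mx_norm_entry (c - y) i j; have := mx_norm_entry (c - y') i j.
rewrite (ord1 i) !mxE eqxx /= => /le_trans/(_ cy') cy'j /le_trans/(_ cy) cyj.
case: (eqVneq j m) => [jm|jm]; last by rewrite mulr0 add0r; case: ifP.
subst j; rewrite ltnn mulr1; move: cyj cy'j; rewrite !ler_norml.
by case/orP: sm => /andP[? ?] /andP[? ?] /andP[? ?]; apply/andP; split; lra.
Qed.

Lemma partials_near_id_lipschitz f c r eps : 0 < r ->
  (forall z, closed_ball c r z -> forall i, derivable f z (delta_mx 0 i) /\
     `|'D_(delta_mx 0 i) f z - delta_mx 0 i| <= eps) ->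
  (eps *+ n).-lipschitz_(closed_ball c r) (f - id).
Proof.
move=> r0 df [y' y] [/= cy' cy]; rewrite !fctE.
pose u m := f (coord_path y y' m) - coord_path y y' m.
have step (m : 'I_n) : `|u m.+1 - u m| <= eps * `|y' - y|.
  have eps0 : 0 <= eps by have [_] := df y cy m; exact: le_trans.
  rewrite /u -coord_pathS.
  apply: le_trans (mean_value_ineq_line0 _ _ _ _ eps _) _.
    by move=> s sm; apply: df; exact: coord_path_line_ball.
  by rewrite ler_wpM2l //; have := mx_norm_entry (y' - y) 0 m; rewrite !mxE.
have -> : f y' - y' - (f y - y) = \sum_(m < n) (u m.+1 - u m).
  rewrite -(big_mkord xpredT (fun m => u m.+1 - u m)) telescope_sumr //.
  by rewrite /u coord_path_full coord_path0.
apply: le_trans (ler_norm_sum _ _ _) _.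
apply: le_trans (ler_sum _ (fun m _ => step m)) _.
by rewrite sumr_const card_ord mulrnAl.
Qed.

End mean_value_inequality.

Definition C1_near_id {R : realType} {n : nat} (U : set 'rV[R]_n) (eps : R)
    (f : 'rV[R]_n -> 'rV[R]_n) :=
  forall y, U y -> `|f y - y| <= eps /\
    forall i, derivable f y (delta_mx 0 i) /\
      `|'D_(delta_mx 0 i) f y - delta_mx 0 i| <= eps.

Definition local_inverse {R : realType} {n : nat} (f : 'rV[R]_n -> 'rV[R]_n)
    (r : R) (x : 'rV[R]_n) : 'rV[R]_n :=
  xget 0 [set y | closed_ball x r y /\ f y = x].

Section local_inverse.
Context {R : realType} {n : nat}.
Local Notation V := 'rV[R]_n.
(* The complete and the normed structures of matrices are not joined
   canonically; Banach's fixed point theorem needs both. *)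
#[local] HB.instance Definition _ := NormedModule.on 'M[R]_(1, n).

Context {f : V -> V} {U : set V} {eps r : R}.
Hypotheses (eps_gt0 : 0 < eps) (eps_le_r : eps <= r) (eps_small : eps *+ n < 1).
Hypothesis f_near_id : C1_near_id U eps f.

Let r_gt0 : 0 < r. Proof. exact: lt_le_trans eps_le_r. Qed.

Let near_id_lipschitz {x} : closed_ball x r `<=` U ->
  (eps *+ n).-lipschitz_(closed_ball x r) (f - id).
Proof.
by move=> xU; apply: partials_near_id_lipschitz => // z /xU /f_near_id[].
Qed.

Lemma local_inverseP {x} : closed_ball x r `<=` U ->
  closed_ball x r (local_inverse f r x) /\ f (local_inverse f r x) = x.
Proof.
move=> xU; apply: (@xgetPex _ 0 [set y | closed_ball x r y /\ f y = x]).
have q_bounds : 0 <= eps *+ n < 1 by rewrite eps_small mulrn_wge0 // ltW.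
have f_r y : closed_ball x r y -> `|f y - y| <= r.
  by move=> /xU /f_near_id[+ _] => /le_trans; apply.
have [y xy fy] := @lipschitz_perturbation_solve R V f x r _ r_gt0 q_bounds
  (near_id_lipschitz xU) f_r.
by exists y.
Qed.

Lemma local_inverse_unique {x y} : closed_ball x r `<=` U ->
  closed_ball x r y -> f y = x -> local_inverse f r x = y.
Proof.
move=> xU xy fy; have [xl fl] := local_inverseP xU.
have := @lipschitz_perturbation_inj R V f _ _ eps_small (near_id_lipschitz xU).
by apply; rewrite ?inE // fl fy.
Qed.

Lemma local_inverse_image (O O0 O1 : set V) : O1 `<=` U ->
  (forall x, O x -> closed_ball x r `<=` O1) ->
  (forall z, O0 z -> closed_ball z r `<=` O) ->
  (forall x, O x -> O1 (local_inverse f r x) /\ x = f (local_inverse f r x)) /\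
  O0 `<=` local_inverse f r @` O.
Proof.
move=> O1U ballO1 ballO.
have ballU x : O x -> closed_ball x r `<=` U by move=> /ballO1 xO1 y /xO1 /O1U.
split=> [x Ox|z O0z].
  by have [/(ballO1 x Ox) ? ->] := local_inverseP (ballU x Ox).
have zz : closed_ball z r z by exact: closed_ballxx.
have Uz : U z by apply/O1U/(ballO1 z (ballO z O0z z zz)).
have fz : `|f z - z| <= r by apply: le_trans eps_le_r; exact: (f_near_id z Uz).1.
have Ofz : O (f z).
  by apply: (ballO z O0z); rewrite closed_ballE // /closed_ball_ /= distrC.
exists (f z) => //; apply: local_inverse_unique (ballU _ Ofz) _ erefl.
by rewrite closed_ballE.
Qed.

End local_inverse.

Lemma cont_C1_near_id {R : realType} {T : R} {U : set 'rV[R]_3}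
    {phi : R -> 'rV[R]_3 -> 'rV[R]_3} :
  0 <= T -> open U -> cont_Ck 1 T U phi -> (forall x, U x -> phi 0 x = x) ->
  forall eps, 0 < eps -> exists2 delta, 0 < delta &
    forall t, 0 <= t <= T -> t < delta -> C1_near_id U eps (phi t).
Proof.
move=> T0 oU [phiC1 phi_cont] phi0 eps eps0.
have T00 : (0 : R) <= 0 <= T by rewrite lexx T0.
have [delta delta0 near0] := phi_cont 0 T00 eps eps0.
exists delta => // t tT td y Uy.
have td0 : `|t - 0| < delta by rewrite subr0 ger0_norm // (andP tT).1.
have close s : (size s <= 1)%N -> `|dit s (phi t) y - dit s (phi 0) y| <= eps.
  by move=> s1; exact: near0 t tT td0 s s1 y Uy.
split; first by have := close [::] isT; rewrite /= phi0.
move=> i; split; first exact: (phiC1 t tT [::] isT).2 isT i y Uy.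
have := close [:: i] isT; rewrite /=.
suff -> : 'D_(evec R i) (phi 0) y = evec R i by [].
rewrite -[RHS](derive_id y (evec R i)); apply: near_eq_derive.
by near=> z; apply: phi0; near: z; exact: open_nbhs_nbhs.
Unshelve. all: by end_near.
Qed.

Theorem proposition2 (R : realType) (R0 : R) (D : set 'rV[R]_3) (T : R)
  (phi : R -> 'rV[R]_3 -> 'rV[R]_3) (O O0 O1 : set 'rV[R]_3) :
  0 < R0 -> admissible R0 D -> 0 < T ->
  C1_Ck 1 T (dcover R0 D) phi -> cont_Ck 2 T (dcover R0 D) phi ->
  (forall x, dcover R0 D x -> phi 0 x = x) ->
  open O -> connected O -> open O0 -> connected O0 ->
  open O1 -> connected O1 -> convex_set O1 ->
  Bzero R0 `<=` O0 -> compact_in O0 O -> compact_in O O1 ->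
  compact_in O1 (dcover R0 D) ->
  exists T1 : R, 0 < T1 < T /\
    exists psi : R -> 'rV[R]_3 -> 'rV[R]_3,
      forall t, 0 <= t <= T1 ->
        (forall x, O x -> O1 (psi t x) /\ x = phi t (psi t x)) /\
        O0 `<=` psi t @` O.
Proof.
move=> _ [_ oD _ _ _] T0 [phiC1 _] _ phi0 oO _ _ _ oO1 _ _ _
  [cO0 O0O] [cO OO1] [_ O1D].
have [r0 r0_gt0 ballO] := compact_ball_subset_open cO0 oO O0O.
have [r1 r1_gt0 ballO1] := compact_ball_subset_open cO oO1 OO1.
pose m := Num.min (Num.min r0 r1) 1; pose eps := m / 4.
have [m_gt0 m_r0 m_r1 m_1] : [/\ 0 < m, m <= r0, m <= r1 & m <= 1].
  by rewrite /m !lt_min !ge_min !lexx r0_gt0 r1_gt0 ltr01 ?orbT; split.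
have [eps_gt0 eps_r0 eps_r1 eps3] :
    [/\ 0 < eps, eps < r0, eps < r1 & eps *+ 3 < 1].
  by rewrite -mulr_natr /eps; split; lra.
have [delta delta_gt0 phi_near_id] :=
  cont_C1_near_id (ltW T0) oD phiC1 phi0 eps eps_gt0.
pose d := Num.min delta T.
have [d_gt0 d_delta d_T] : [/\ 0 < d, d <= delta & d <= T].
  by rewrite /d lt_min !ge_min !lexx delta_gt0 T0 ?orbT; split.
exists (d / 2); split; first by apply/andP; split; lra.
exists (fun t => local_inverse (phi t) eps) => t /andP[t0 tT1].
apply: (local_inverse_image eps_gt0 (lexx eps) eps3).
- by apply: phi_near_id; first apply/andP; lra.
- by move=> y /subset_closure /O1D.
- move=> x /subset_closure /ballO1; apply: subset_trans.
  exact: closed_ball_subset.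
- move=> z /subset_closure /ballO; apply: subset_trans.
  exact: closed_ball_subset.
Qed.
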